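(* Let $k\ge1$ and $n\neq0$ be integers and $\mathcal K=J(k,2n)$, whose knot group is $G(\mathcal K)=\langle a,b\mid w^na=bw^n\rangle$ with $w=(ba^{-1})^m(b^{-1}a)^m$ if $k=2m$ and $w=(ba^{-1})^mba(b^{-1}a)^m$ if $k=2m+1$. For a representation $\rho:G(\mathcal K)\to\mathrm{SL}_2(\mathbb C)$ of the form $\rho(a)=\begin{bmatrix} M&1\\0&M^{-1}\end{bmatrix}$, $\rho(b)=\begin{bmatrix} M&0\\2-y&M^{-1}\end{bmatrix}$ (so $y=\operatorname{tr}\rho(ab^{-1})$), put $z=\operatorname{tr}\rho(w)$. Then: (1) If $k=2m$, then $S_{m-1}(y)S_{n-1}(z)\neq0$ for every non-abelian representation $\rho$ of this form. (2) If $k=2m+1\ge3$ (in which case $\mathcal K$ is hyperbolic) and $\rho=\rho_0$ is the holonomy representation of $\mathcal K$, conjugated into this form, then $S_m(y)S_{m-1}(y)\neq0$.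
   Context: $J(k,l)$ denotes the double twist knot/link, the rational knot/link corresponding to the continued fraction $-k+\frac1l$. Every non-abelian representation $G(\mathcal K)\to\mathrm{SL}_2(\mathbb C)$ is conjugate to one of the displayed form with $(M,y)\in(\mathbb C\setminus\{0\})\times\mathbb C$. $S_l(v)$, $l\in\mathbb Z$, are the Chebyshev polynomials of the second kind: $S_0=1$, $S_1=v$, $S_l=vS_{l-1}-S_{l-2}$ for all integers $l$. For a hyperbolic knot, the holonomy representation $\rho_0$ is a lift to $\mathrm{SL}_2(\mathbb C)$ of the discrete faithful representation into $\mathrm{PSL}_2(\mathbb C)$ coming from the complete hyperbolic structure of the knot exterior; it is non-abelian with $\operatorname{tr}\rho_0(a)=\pm2$. *)

From HB Require Import structures.
From mathcomp Require Import all_boot all_order all_algebra.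
From mathcomp Require Import complex.
From mathcomp Require Import reals.
Set Implicit Arguments. Unset Strict Implicit. Unset Printing Implicit Defensive.
Import Order.TTheory GRing.Theory Num.Theory.
Local Open Scope ring_scope.

(* Words in the free group on {a, b}: a letter (g, e) is the generator
   a (g = false) or b (g = true), inverted iff e = true. *)
Definition letter := (bool * bool)%type.
Definition word := seq letter.
Definition la : letter := (false, false).
Definition laI : letter := (false, true).
Definition lb : letter := (true, false).
Definition lbI : letter := (true, true).

Definition winv (u : word) : word := rev [seq (x.1, ~~ x.2) | x <- u].
Definition wrep (j : nat) (u : word) : word := flatten (nseq j u).
Definition wpow (u : word) (n : int) : word :=
  match n with Posz j => wrep j u | Negz j => wrep j.+1 (winv u) end.

Definition wJ (k : nat) : word :=
  let m := k./2 in
  if odd k then wrep m [:: lb; laI] ++ [:: lb; la] ++ wrep m [:: lbI; la]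
  else wrep m [:: lb; laI] ++ wrep m [:: lbI; la].

Definition relL (k : nat) (n : int) : word := wpow (wJ k) n ++ [:: la].
Definition relR (k : nat) (n : int) : word := lb :: wpow (wJ k) n.
Definition relator (k : nat) (n : int) : word :=
  relL k n ++ winv (relR k n).

Definition freduce (u : word) : word :=
  foldr (fun x acc => match acc with
                      | y :: t => if y == (x.1, ~~ x.2) then t else x :: acc
                      | [::] => [:: x] end) [::] u.

Definition in_normal_closure (r u : word) : Prop :=
  exists cs : seq (word * bool),
    freduce u = freduce (flatten [seq c.1 ++ (if c.2 then winv r else r) ++ winv c.1
                                 | c <- cs]).

Section Rep.
Variable R : realType.
Local Notation C := (R[i]).

Definition mx2 (p q r s : C) : 'M[C]_2 :=
  \matrix_(i < 2, j < 2)
    if (i : nat) == 0%N then (if (j : nat) == 0%N then p else q)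
    else (if (j : nat) == 0%N then r else s).

Definition rhoA (M : C) : 'M[C]_2 := mx2 M 1 0 M^-1.
Definition rhoB (M y : C) : 'M[C]_2 := mx2 M 0 (2 - y) M^-1.

Definition ev_letter (M y : C) (x : letter) : 'M[C]_2 :=
  let g := if x.1 then rhoB M y else rhoA M in
  if x.2 then invmx g else g.

Definition ev_word (M y : C) (u : word) : 'M[C]_2 :=
  foldr (fun x acc => ev_letter M y x *m acc) 1%:M u.

Definition is_rep (k : nat) (n : int) (M y : C) : Prop :=
  M != 0 /\ ev_word M y (relL k n) = ev_word M y (relR k n).

Definition non_abelian (M y : C) : Prop :=
  rhoA M *m rhoB M y != rhoB M y *m rhoA M.

Definition discrete_image (M y : C) : Prop :=
  exists e : R, 0 < e /\
    forall u : word,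
      (forall i j : 'I_2, `|ev_word M y u i j - (1%:M : 'M[C]_2) i j| < (e%:C)%C) ->
      ev_word M y u = 1%:M.

(* the induced map G(K) -> PSL_2(C) is injective *)
Definition faithful_PSL (k : nat) (n : int) (M y : C) : Prop :=
  forall u : word,
    ev_word M y u = 1%:M \/ ev_word M y u = - 1%:M ->
    in_normal_closure (relator k n) u.

Definition discrete_faithful (k : nat) (n : int) (M y : C) : Prop :=
  is_rep k n M y /\ discrete_image M y /\ faithful_PSL k n M y.

Fixpoint chebS_nat (l : nat) (v : C) : C :=
  match l with
  | 0 => 1
  | 1 => v
  | (j.+1 as l').+1 => v * chebS_nat l' v - chebS_nat j v
  end.

Definition chebS (l : int) (v : C) : C :=
  match l with
  | Posz j => chebS_nat j v
  | Negz 0 => 0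
  | Negz j.+1 => - chebS_nat j v
  end.

End Rep.

(* If X in SL_2(C) has trace t, Cayley-Hamilton gives X^2 = t X - 1 and hence
   X^(l+1) = S_l(t) X - S_(l-1)(t); so S_(l-1)(t) = 0 forces X^l = +-1, the sign
   coming from the Cassini identity S_l^2 - S_(l-1) S_(l+1) = 1.

   (1) rho(b a^-1) and rho(b^-1 a) both have trace y, so S_(m-1)(y) = 0 makes
   rho(w) = +-1; and S_(n-1)(z) = 0 makes rho(w)^n = +-1.  In both cases rho(w^n)
   is central and w^n a = b w^n gives rho(a) = rho(b), so rho is abelian.

   (2) S_m(y) = 0 or S_(m-1)(y) = 0 gives rho_0((b a^-1)^l) = +-1 with l = m+1 or
   l = m, so by faithfulness in PSL_2(C) the word (b a^-1)^l is in the normal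
   closure of the relator.  Mapping a, b to the reflections x |-> -x, x |-> 1 - x
   of Z sends b a^-1 to the translation by 1 and the relator to the translation by
   2nk - 1, so the normal closure goes to translations by multiples of 2nk - 1;
   but 0 < l < |2nk - 1|. *)

From HB Require Import structures.
From mathcomp Require Import all_boot all_order all_algebra.
From mathcomp Require Import complex reals.
From mathcomp Require Import ring zify.
Import Order.TTheory GRing.Theory Num.Theory.
Local Open Scope ring_scope.
Set Implicit Arguments. Unset Strict Implicit.

Definition pm_one (A : pzRingType) (x : A) : Prop := x = 1 \/ x = -1.

Lemma pm_oneM (A : pzRingType) (x y : A) : pm_one x -> pm_one y -> pm_one (x * y).
Proof.
by case=> ->; case=> ->; rewrite ?mul1r ?mulN1r ?opprK; [left|right|right|left].
Qed.

Lemma pm_oneX (A : pzRingType) (x : A) j : pm_one x -> pm_one (x ^+ j).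
Proof. by move=> x_pm; elim: j => [|j IH]; [left|rewrite exprS; apply: pm_oneM]. Qed.

Lemma pm_oneV (A : unitRingType) (x : A) : pm_one x -> pm_one x^-1.
Proof. by case=> ->; rewrite ?invrN invr1; [left|right]. Qed.

Lemma pm_one_exprz (A : unitRingType) (x : A) (n : int) : pm_one x -> pm_one (x ^ n).
Proof. by case: n => j x_pm; [apply: pm_oneX | apply/pm_oneV/pm_oneX]. Qed.

Section Chebyshev.
Variable R : realType.
Local Notation C := (R[i]).

Lemma chebS_cassini (v : C) j :
  chebS_nat j.+1 v ^+ 2 - chebS_nat j v * chebS_nat j.+2 v = 1.
Proof.
elim: j => [|j IH]; first by rewrite /=; ring.
have S3 : chebS_nat j.+3 v = v * chebS_nat j.+2 v - chebS_nat j.+1 v by [].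
have S2 : chebS_nat j.+2 v = v * chebS_nat j.+1 v - chebS_nat j v by [].
by rewrite -[RHS]IH S3 S2; ring.
Qed.

Lemma chebS_root_sq (v : C) j : chebS_nat j.+1 v = 0 -> chebS_nat j v ^+ 2 = 1.
Proof.
have S2 : chebS_nat j.+2 v = v * chebS_nat j.+1 v - chebS_nat j v by [].
by move=> S0; rewrite -(chebS_cassini v j) S2 S0; ring.
Qed.

Section Quadratic.
Variables (A : lalgType C) (x : A) (t : C).
Hypothesis x_quad : x * x = t *: x - 1.

Lemma exprSS_chebS j : x ^+ j.+2 = chebS_nat j.+1 t *: x - (chebS_nat j t)%:A.
Proof.
elim: j => [|j IH]; first by rewrite expr2 x_quad scale1r.
have S2 : chebS_nat j.+2 t = t * chebS_nat j.+1 t - chebS_nat j t by [].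
rewrite exprSr IH mulrBl -scalerAl mulr_algl x_quad scalerBr scalerA S2.
by rewrite addrAC -scalerBl mulrC.
Qed.

Lemma pm_one_expr_chebS_root l : chebS (l%:Z - 1) t = 0 -> pm_one (x ^+ l).
Proof.
case: l => [|[|j]]; first by left; rewrite expr0.
  by rewrite subrr /= => /eqP; rewrite oner_eq0.
have -> : j.+2%:Z - 1 = j.+1 by lia.
change (chebS_nat j.+1 t = 0 -> pm_one (x ^+ j.+2)) => S0.
rewrite exprSS_chebS S0 scale0r sub0r.
have /eqP := chebS_root_sq S0; rewrite sqrf_eq1 => /orP[] /eqP ->.
  by right; rewrite scale1r.
by left; rewrite scaleN1r opprK.
Qed.

End Quadratic.

Lemma pm_one_exprz_chebS_root (A : unitAlgType C) (x : A) (t : C) (n : int) :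
  x * x = t *: x - 1 -> chebS (n - 1) t = 0 -> pm_one (x ^ n).
Proof.
move=> x_quad; case: n => j; first exact: pm_one_expr_chebS_root.
(* for n = -(j+1) < 0, S_(n-1) = S_(-j-2) = - S_j *)
have -> : Negz j - 1 = Negz j.+1 by rewrite !NegzE; lia.
move=> /= /eqP; rewrite oppr_eq0 => /eqP Sj0.
apply/pm_oneV/(pm_one_expr_chebS_root x_quad).
by rewrite -addn1 PoszD addrK.
Qed.

End Chebyshev.

Lemma mx22_cayley_hamilton (R : comNzRingType) (A : 'M[R]_2) :
  A * A = \tr A *: A - (\det A)%:A.
Proof.
have c0 : (char_poly A)`_0 = \det A by rewrite char_poly_det sqrrN expr1n mul1r.
have c1 : (char_poly A)`_1 = - \tr A by rewrite char_poly_trace.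
have c2 : (char_poly A)`_2 = 1.
  by have /monicP := char_poly_monic A; rewrite lead_coefE size_char_poly.
have := Cayley_Hamilton A.
rewrite -(coefK (char_poly A)) size_char_poly poly_def rmorph_sum /=.
rewrite !big_ord_recr big_ord0 /= add0r c0 c1 c2.
rewrite !horner_mxZ !rmorphXn /= horner_mx_X expr0 expr1 scale1r -expr2.
move=> /eqP; rewrite addrC addr_eq0 => /eqP ->.
by rewrite scaleNr opprD opprK addrC.
Qed.

Section TwoByTwo.
Variable R : realType.
Local Notation C := (R[i]).
Implicit Types p q r s : C.

Lemma mx2_mul p q r s (p' q' r' s' : C) :
  mx2 p q r s *m mx2 p' q' r' s' =
  mx2 (p * p' + q * r') (p * q' + q * s') (r * p' + s * r') (r * q' + s * s').
Proof.
apply/matrixP => i j; rewrite !mxE !big_ord_recl big_ord0 !mxE /= addr0.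
by case: i => [[|[|i]] Hi]; case: j => [[|[|j]] Hj].
Qed.

Lemma mx2_scalar (c : C) : c%:M = mx2 c 0 0 c.
Proof.
apply/matrixP => i j; rewrite !mxE.
by case: i => [[|[|i]] Hi]; case: j => [[|[|j]] Hj].
Qed.

Lemma mxtrace_mx2 p q r s : \tr (mx2 p q r s) = p + s.
Proof. by rewrite /mxtrace !big_ord_recl big_ord0 !mxE /= addr0. Qed.

Lemma det_mx2 p q r s : \det (mx2 p q r s) = p * s - q * r.
Proof.
rewrite (expand_det_row _ 0) !big_ord_recl big_ord0 addr0 /cofactor !det_mx11.
by rewrite !mxE /=; ring.
Qed.

End TwoByTwo.

Lemma mulmx1_invmx (R : comUnitRingType) n (A B : 'M[R]_n) :
  A *m B = 1%:M -> invmx A = B.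
Proof.
move=> AB; have [uA _] := mulmx1_unit AB.
by rewrite -[invmx A]mulmx1 -AB mulmxA mulVmx // mul1mx.
Qed.

Lemma unitmx_det1 (R : comUnitRingType) n (A : 'M[R]_n.+1) :
  \det A = 1 -> A \is a GRing.unit.
Proof. by move=> detA; rewrite -[_ \is a _]/(_ \in unitmx) unitmxE detA unitr1. Qed.

Section Representation.
Variables (R : realType) (M y : R[i]).
Hypothesis M_neq0 : M != 0.
Local Notation ev := (ev_word M y).

Lemma ev_word_cat u v : ev (u ++ v) = ev u *m ev v.
Proof. by elim: u => [|x u IH] /=; rewrite ?mul1mx // IH mulmxA. Qed.

Lemma ev_word_wrep j u : ev (wrep j u) = ev u ^+ j.
Proof. by elim: j => [|j IH]; rewrite ?expr0 // exprS -IH -mulmxE -ev_word_cat. Qed.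

Lemma invmx_rhoA : invmx (rhoA M) = mx2 M^-1 (-1) 0 M.
Proof. by apply: mulmx1_invmx; rewrite mx2_mul mx2_scalar; congr mx2; field. Qed.

Lemma invmx_rhoB : invmx (rhoB M y) = mx2 M^-1 0 (y - 2) M.
Proof. by apply: mulmx1_invmx; rewrite mx2_mul mx2_scalar; congr mx2; field. Qed.

Lemma det_ev_letter x : \det (ev_letter M y x) = 1.
Proof.
have det_gen : \det (if x.1 then rhoB M y else rhoA M) = 1.
  by case: x.1; rewrite det_mx2; field.
by rewrite /ev_letter; case: x.2; rewrite ?det_inv det_gen ?invr1.
Qed.

Lemma det_ev_word u : \det (ev u) = 1.
Proof. by elim: u => [|x u IH]; rewrite ?det1 //= det_mulmx det_ev_letter IH mulr1. Qed.

Lemma ev_letter_inv x : ev_letter M y (x.1, ~~ x.2) = (ev_letter M y x)^-1.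
Proof. by rewrite /ev_letter; case: x.2 => //=; rewrite invrK. Qed.

Lemma ev_word_winv u : ev (winv u) = (ev u)^-1.
Proof.
elim: u => [|x u IH]; first by rewrite /= invr1.
rewrite /winv /= rev_cons -cats1 -/(winv u) ev_word_cat IH /= mulmx1.
rewrite ev_letter_inv mulmxE invrM //; apply: unitmx_det1.
  exact: det_ev_letter.
exact: det_ev_word.
Qed.

Lemma ev_word_wpow u n : ev (wpow u n) = ev u ^ n.
Proof. by case: n => j /=; rewrite ev_word_wrep // ev_word_winv exprVn. Qed.

Lemma ev_word_quad u : ev u * ev u = \tr (ev u) *: ev u - 1.
Proof. by rewrite mx22_cayley_hamilton det_ev_word scale1r. Qed.

Lemma mxtrace_ev_baI : \tr (ev [:: lb; laI]) = y.
Proof. by rewrite /= /ev_letter /= mulmx1 invmx_rhoA mx2_mul mxtrace_mx2; field. Qed.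

Lemma mxtrace_ev_bIa : \tr (ev [:: lbI; la]) = y.
Proof. by rewrite /= /ev_letter /= mulmx1 invmx_rhoB mx2_mul mxtrace_mx2; field. Qed.

End Representation.

(* (s, t) stands for the affine map x |-> s x + t of Z; a and b act as the
   reflections x |-> -x and x |-> 1 - x, generating the infinite dihedral group. *)
Definition dih_mul (g h : int * int) : int * int := (g.1 * h.1, g.1 * h.2 + g.2).
Definition dih_letter (x : letter) : int * int := (-1, if x.1 then 1 else 0).
Definition dih_word (u : word) : int * int :=
  foldr (fun x => dih_mul (dih_letter x)) (1, 0) u.

Lemma dih_mulA g h l : dih_mul g (dih_mul h l) = dih_mul (dih_mul g h) l.
Proof. by rewrite /dih_mul /=; congr pair; ring. Qed.

Lemma dih_word_cat u v : dih_word (u ++ v) = dih_mul (dih_word u) (dih_word v).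
Proof.
elim: u => [|x u IH] /=; last by rewrite IH dih_mulA.
by case: (dih_word v) => s t; rewrite /dih_mul /=; congr pair; ring.
Qed.

Lemma dih_word_sign u : (dih_word u).1 * (dih_word u).1 = 1.
Proof. by elim: u => [|x u IH] //=; rewrite mulN1r mulrNN IH. Qed.

Lemma dih_word_winv u :
  dih_word (winv u) = ((dih_word u).1, - ((dih_word u).1 * (dih_word u).2)).
Proof.
elim: u => [|x u IH] /=; first by rewrite mulr0 oppr0.
rewrite /winv /= rev_cons -cats1 -/(winv u) dih_word_cat IH.
by case: (dih_word u) => s t; rewrite /dih_mul /=; congr pair; ring.
Qed.

Lemma dih_word_freduce u : dih_word (freduce u) = dih_word u.
Proof.
elim: u => [|x u IH] //=; rewrite -IH -/(freduce u).
case: (freduce u) => [|z v] //=; case: eqP => [->|_] //=.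
by case: (dih_word v) => s t; rewrite /dih_mul /=; congr pair; ring.
Qed.

Lemma dih_word_wrep j u t : dih_word u = (1, t) -> dih_word (wrep j u) = (1, j%:Z * t).
Proof.
move=> du; elim: j => [|j IH]; first by rewrite mul0r.
rewrite /wrep /= -/(wrep j u) dih_word_cat du IH /dih_mul /=.
by congr pair; rewrite ?mul1r // -addn1 PoszD; ring.
Qed.

Lemma dih_word_wJ k : dih_word (wJ k) = (1, k%:Z).
Proof.
have rep m (s : word) : dih_word s = (1, 1) -> dih_word (wrep m s) = (1, m%:Z).
  by move=> /(dih_word_wrep m) ->; rewrite mulr1.
rewrite /wJ -[in RHS](odd_double_half k) PoszD -muln2 PoszM.
by case: (odd k); rewrite !dih_word_cat !rep // /dih_mul /=; congr pair; ring.
Qed.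

Lemma dih_word_wpow k n : dih_word (wpow (wJ k) n) = (1, n * k%:Z).
Proof.
case: n => j /=; first by rewrite (dih_word_wrep _ (dih_word_wJ k)).
rewrite (@dih_word_wrep _ _ (- k%:Z)); last first.
  by rewrite dih_word_winv dih_word_wJ /= !mul1r.
by rewrite NegzE; congr pair; ring.
Qed.

Lemma dih_word_relator k n : dih_word (relator k n) = (1, 2 * n * k%:Z - 1).
Proof.
rewrite /relator /relL /relR !dih_word_cat dih_word_winv /= dih_word_wpow /dih_mul /=.
by congr pair; ring.
Qed.

Lemma dih_word_conj c q :
  dih_mul (dih_word c) (dih_mul (1, q) (dih_word (winv c))) = (1, (dih_word c).1 * q).
Proof.
rewrite dih_word_winv; have := dih_word_sign c.
case: (dih_word c) => s t /= ss; rewrite /dih_mul /= !mul1r ss.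
by congr pair; rewrite mulrDr mulrN mulrA ss mul1r; ring.
Qed.

Lemma dih_word_normal_closure r p u : dih_word r = (1, p) ->
  in_normal_closure r u -> exists j, dih_word u = (1, p * j).
Proof.
move=> dr [cs]; rewrite -dih_word_freduce => ->; rewrite dih_word_freduce.
elim: cs => [|[c b] cs [j IH]]; first by exists 0; rewrite mulr0.
have dr' : dih_word (if b then winv r else r) = (1, p * (if b then -1 else 1)).
  by case: b; rewrite ?dih_word_winv dr /= ?mul1r ?mulrN1 ?mulr1.
exists ((dih_word c).1 * (if b then -1 else 1) + j).
rewrite /= !dih_word_cat dr' dih_word_conj IH /dih_mul /=.
by congr pair; ring.
Qed.

Lemma relator_exponent_ndvd (k l : nat) (n j : int) :
  n != 0 -> (0 < l)%N -> (l.+1 < 2 * k)%N -> l%:Z != (2 * n * k%:Z - 1) * j.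
Proof.
move=> n_neq0 l_gt0 lk; apply/eqP => E.
have p_large : 2 * k%:Z - 1 <= 2 * n * k%:Z - 1 \/ 2 * n * k%:Z - 1 <= 1 - 2 * k%:Z.
  have [n_ge1|n_le1] : 1 <= n \/ n <= -1 by lia.
  - by left; nia.
  - by right; nia.
move: E p_large; set p := 2 * n * k%:Z - 1 => E p_large.
have [j_ge1|j_le1] : 1 <= j \/ j <= -1.
  by case: (ltrgt0P j) => [j0|j0|j0]; [left|right|move: E; rewrite j0 mulr0]; lia.
all: by case: p_large => ?; nia.
Qed.

Lemma baI_power_notin_normal_closure k n l :
  n != 0 -> (0 < l)%N -> (l.+1 < 2 * k)%N ->
  ~ in_normal_closure (relator k n) (wrep l [:: lb; laI]).
Proof.
move=> n_neq0 l_gt0 lk /(dih_word_normal_closure (dih_word_relator k n)) [j].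
rewrite (@dih_word_wrep _ _ 1) // mulr1 => -[/eqP].
exact/negP/relator_exponent_ndvd.
Qed.

Lemma pm_one_wpow_abelian (R : realType) k n (M y : R[i]) : is_rep k n M y ->
  pm_one (ev_word M y (wpow (wJ k) n)) -> ~ non_abelian M y.
Proof.
move=> [_ rel] W_pm; move: rel; rewrite /relL /relR ev_word_cat /= mulmx1.
rewrite /non_abelian; case: W_pm => ->; rewrite ?(mul1mx, mulmx1, mulNmx, mulmxN).
  by rewrite /ev_letter /= => ->; rewrite eqxx.
by move=> /oppr_inj; rewrite /ev_letter /= => ->; rewrite eqxx.
Qed.

Theorem proposition3p4 (R : realType) (k : nat) (n : int) :
  (0 < k)%N -> n != 0 ->
  (* (1) k = 2m *)
  (~~ odd k ->
   forall M y : R[i], is_rep k n M y -> non_abelian M y ->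
     chebS ((k./2)%:Z - 1) y * chebS (n - 1) (\tr (ev_word M y (wJ k))) != 0)
  /\
  (* (2) k = 2m+1 >= 3, rho = holonomy representation (discrete faithful) *)
  (odd k -> (3 <= k)%N ->
   forall M y : R[i], discrete_faithful k n M y ->
     chebS (k./2)%:Z y * chebS ((k./2)%:Z - 1) y != 0).
Proof.
move=> _ n_neq0; set m := k./2; split.
- move=> k_even M y rep nab; have M_neq0 : M != 0 by case: rep.
  have wJ_even : wJ k = wrep m [:: lb; laI] ++ wrep m [:: lbI; la].
    by rewrite /wJ (negbTE k_even).
  rewrite mulf_eq0 negb_or; apply/andP; split; apply/negP => /eqP S0;
    apply: (pm_one_wpow_abelian rep _ nab); rewrite ev_word_wpow //.
  + apply/pm_one_exprz; rewrite wJ_even ev_word_cat !ev_word_wrep // mulmxE.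
    by apply: pm_oneM; apply: (pm_one_expr_chebS_root (ev_word_quad _ _ _));
      rewrite ?mxtrace_ev_baI ?mxtrace_ev_bIa.
  + exact: (pm_one_exprz_chebS_root (ev_word_quad _ _ _) S0).
- move=> k_odd k_ge3 M y [[M_neq0 _] [_ faithful]].
  have k_eq : k = m.*2.+1 by rewrite -{1}(odd_double_half k) k_odd.
  have not_pm_one l : (0 < l)%N -> (l <= m.+1)%N ->
      ~ pm_one (ev_word M y (wrep l [:: lb; laI])).
    move=> l_gt0 lm /faithful; apply: baI_power_notin_normal_closure => //.
    by move: k_ge3; rewrite k_eq; lia.
  have baI_quad := ev_word_quad y M_neq0 [:: lb; laI].
  rewrite mxtrace_ev_baI // in baI_quad.
  rewrite mulf_eq0 negb_or; apply/andP; split; apply/negP => /eqP S0.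
  + apply: (not_pm_one m.+1) => //; rewrite ev_word_wrep.
    by apply: (pm_one_expr_chebS_root baI_quad); rewrite -addn1 PoszD addrK.
  + apply: (not_pm_one m); first by move: k_ge3; rewrite k_eq; lia.
      exact: leqW.
    by rewrite ev_word_wrep; exact: (pm_one_expr_chebS_root baI_quad).
Qed.
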